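(* Let $t>0$ and $k\in\mathbb{N}$. For all $(y_1,\dots,y_{k+1})\in\mathbb{R}^{k+1}$, $$-\sum_{j=1}^k\mathbf{H}_t(y_{j+1}-y_j)\leq-\sum_{j=1}^k\mathbf{H}_t^{j,k+1}(y_{k+1}-y_j).$$
   Context: $\mathbf{H}_t(x)=e^{t^{1/3}x}$, and for integers $1\leq j<n$, $\mathbf{H}_t^{j,n}(x)=(n-1)^{-1}e^{t^{1/3}x/(n-j)}$. *)

From Stdlib Require Import Reals.
Open Scope R_scope.

Definition Ht (t x : R) : R := exp (Rpower t (1/3) * x).

Definition Htjn (t : R) (j n : nat) (x : R) : R :=
  / INR (n - 1) * exp (Rpower t (1/3) * x / INR (n - j)).

Definition sum1 (k : nat) (f : nat -> R) : R :=
  List.fold_right Rplus 0 (List.map f (List.seq 1 k)).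

(** Write [d_i = y_(i+1) - y_i] and [c = t^(1/3)]. For [j <= k] the mean
    [(y_(k+1) - y_j)/(k+1-j)] of the increments [d_j, ..., d_k] is at most
    one of them, so each [exp (c (y_(k+1) - y_j)/(k+1-j))] is at most
    [E = sum_(i=1)^k exp (c d_i)]. The right-hand side is [1/k] times a sum
    of [k] such terms, hence at most [E], which is the left-hand side. *)

From Stdlib Require Import Reals Lra Lia.
Open Scope R_scope.

Lemma sum1_S (k : nat) (f : nat -> R) : sum1 (S k) f = sum1 k f + f (S k).
Proof.
  unfold sum1.
  rewrite List.seq_S, List.map_app, List.fold_right_app; simpl.
  induction (List.map f (List.seq 1 k)) as [|a l IH]; simpl; [lra|].
  rewrite IH; lra.
Qed.

Lemma sum1_le (k : nat) (f g : nat -> R) :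
  (forall j, (1 <= j <= k)%nat -> f j <= g j) -> sum1 k f <= sum1 k g.
Proof.
  induction k as [|k IH]; intros Hfg; [unfold sum1; simpl; lra|].
  rewrite !sum1_S.
  assert (sum1 k f <= sum1 k g) by (apply IH; intros j Hj; apply Hfg; lia).
  assert (f (S k) <= g (S k)) by (apply Hfg; lia).
  lra.
Qed.

Lemma sum1_const (k : nat) (a : R) : sum1 k (fun _ => a) = INR k * a.
Proof.
  induction k as [|k IH]; [unfold sum1; simpl; lra|].
  rewrite sum1_S, IH, S_INR; lra.
Qed.

Lemma sum1_ge0 (k : nat) (f : nat -> R) : (forall j, 0 <= f j) -> 0 <= sum1 k f.
Proof.
  intros Hf; induction k as [|k IH]; [unfold sum1; simpl; lra|].
  rewrite sum1_S; specialize (Hf (S k)); lra.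
Qed.

Lemma sum1_term_le (k j : nat) (f : nat -> R) :
  (forall i, 0 <= f i) -> (1 <= j <= k)%nat -> f j <= sum1 k f.
Proof.
  intros Hf; induction k as [|k IH]; intros Hj; [lia|].
  rewrite sum1_S.
  destruct (Nat.eq_dec j (S k)) as [->|Hne].
  - pose proof (sum1_ge0 k f Hf); lra.
  - assert (f j <= sum1 k f) by (apply IH; lia).
    specialize (Hf (S k)); lra.
Qed.

Lemma mean_increment_le_some_increment (y : nat -> R) (j k : nat) :
  (j <= k)%nat ->
  exists i, (j <= i <= k)%nat /\
    y (S k) - y j <= INR (S k - j) * (y (S i) - y i).
Proof.
  induction k as [|k IH]; intros Hjk.
  - exists 0%nat; split; [lia|].
    replace j with 0%nat by lia; simpl; lra.
  - destruct (Nat.eq_dec j (S k)) as [->|Hne].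
    + exists (S k); split; [lia|].
      rewrite Nat.sub_succ_l, Nat.sub_diag by lia; simpl; lra.
    + destruct IH as [i [Hi Hmean]]; [lia|].
      assert (Hlen : INR (S (S k) - j) = INR (S k - j) + 1)
        by (rewrite <- S_INR; f_equal; lia).
      assert (Hpos : 0 <= INR (S k - j)) by apply pos_INR.
      destruct (Rle_dec (y (S i) - y i) (y (S (S k)) - y (S k))) as [Hle|Hgt].
      * exists (S k); split; [lia|].
        rewrite Hlen.
        pose proof (Rmult_le_compat_l _ _ _ Hpos Hle); lra.
      * exists i; split; [lia|].
        rewrite Hlen; lra.
Qed.

Lemma exp_mean_increment_le_sum (c : R) (y : nat -> R) (j k : nat) :
  0 <= c -> (1 <= j <= k)%nat ->
  exp (c * (y (S k) - y j) / INR (S k - j))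
  <= sum1 k (fun i => exp (c * (y (S i) - y i))).
Proof.
  intros Hc Hj.
  destruct (mean_increment_le_some_increment y j k) as [i [Hi Hmean]]; [lia|].
  assert (Hlen : 0 < INR (S k - j)) by (apply lt_0_INR; lia).
  apply Rle_trans with (exp (c * (y (S i) - y i))).
  - assert (Harg : c * (y (S k) - y j) / INR (S k - j) <= c * (y (S i) - y i)).
    { unfold Rdiv; rewrite Rmult_assoc.
      apply Rmult_le_compat_l; [exact Hc|].
      apply Rmult_le_reg_r with (INR (S k - j)); [exact Hlen|].
      rewrite Rmult_assoc, Rinv_l, Rmult_1_r by lra.
      lra. }
    destruct Harg as [Hlt | ->]; [left; apply exp_increasing, Hlt|right; reflexivity].
  - apply (sum1_term_le k i (fun i => exp (c * (y (S i) - y i)))); [|lia].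
    intros; left; apply exp_pos.
Qed.

Theorem mainTheorem11 (t : R) (k : nat) (y : nat -> R) :
  0 < t ->
  - sum1 k (fun j => Ht t (y (S j) - y j))
  <= - sum1 k (fun j => Htjn t j (S k) (y (S k) - y j)).
Proof.
  (* [Rpower t (1/3)] is [exp ((1/3) * ln t)], positive whatever the sign of [t]. *)
  intros _; apply Ropp_le_contravar; unfold Ht, Htjn.
  set (c := Rpower t (1/3)).
  assert (Hc : 0 <= c) by (left; apply exp_pos).
  set (E := sum1 k (fun i => exp (c * (y (S i) - y i)))).
  destruct k as [|k']; [unfold E, sum1; simpl; lra|].
  replace (S (S k') - 1)%nat with (S k') by lia.
  assert (Hk : 0 < INR (S k')) by (apply lt_0_INR; lia).
  apply Rle_trans with (sum1 (S k') (fun _ => / INR (S k') * E)).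
  - apply sum1_le; intros j Hj.
    apply Rmult_le_compat_l; [left; apply Rinv_0_lt_compat; exact Hk|].
    apply exp_mean_increment_le_sum; assumption.
  - rewrite sum1_const; right; field; lra.
Qed.
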